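(* Let $f:\mathbb{R}^n\to\mathbb{R}\cup\{+\infty\}$ be a polyhedral M-convex function with bounded $\operatorname{dom}_{\mathbb{R}} f$, and $y\in\operatorname{dom}_{\mathbb{R}} f$ with $\phi_{\mathbb{R}}(y)<0$. Let $i\in N$ satisfy $f'_{\mathbb{R}}(y;i,j)>\phi_{\mathbb{R}}(y)$ for all $j\in N\setminus\{i\}$, let $h,k\in N$ be distinct with $f'_{\mathbb{R}}(y;h,k)=\phi_{\mathbb{R}}(y)$, and let $0<\lambda\le\bar c_{\mathbb{R}}(y;h,k)$. Then $\hat y:=y+\lambda(\chi_h-\chi_k)$ satisfies $f'_{\mathbb{R}}(\hat y;i,j)>\phi_{\mathbb{R}}(y)$ for every $j\in N\setminus\{i\}$.
   Context: $N=\{1,\dots,n\}$; $\chi_i$ is the $i$-th unit vector. $\operatorname{dom}_{\mathbb{R}} f=\{x\in\mathbb{R}^n:f(x)<+\infty\}$. A polyhedral convex function $f:\mathbb{R}^n\to\mathbb{R}\cup\{+\infty\}$ (epigraph a polyhedron, $\operatorname{dom}_{\mathbb{R}} f\neq\emptyset$) is M-convex if for all $x,y\in\operatorname{dom}_{\mathbb{R}} f$ and every $i$ with $x(i)>y(i)$ there exist $j$ with $x(j)<y(j)$ and $\epsilon_0>0$ such that $f(x)+f(y)\ge f(x-\epsilon(\chi_i-\chi_j))+f(y+\epsilon(\chi_i-\chi_j))$ for all $\epsilon\in[0,\epsilon_0]$. For $x\in\operatorname{dom}_{\mathbb{R}} f$, $f'_{\mathbb{R}}(x;i,j)=\lim_{\alpha\downarrow0}(f(x+\alpha(\chi_i-\chi_j))-f(x))/\alpha$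 (possibly $+\infty$), $\phi_{\mathbb{R}}(x)=\min_{i,j\in N}f'_{\mathbb{R}}(x;i,j)$, and for finite $f'_{\mathbb{R}}(x;i,j)$, $\bar c_{\mathbb{R}}(x;i,j)=\max\{\lambda\ge0: f(x+\lambda(\chi_i-\chi_j))-f(x)=\lambda f'_{\mathbb{R}}(x;i,j)\}$. *)

From HB Require Import structures.
From mathcomp Require Import all_boot all_order all_algebra.
From mathcomp Require Import all_classical all_reals all_analysis.
Set Implicit Arguments. Unset Strict Implicit. Unset Printing Implicit Defensive.
Import Order.TTheory GRing.Theory Num.Theory.
Local Open Scope ring_scope.
Local Open Scope classical_set_scope.

Section Defs.
Variables (R : realType) (n : nat).
Implicit Types (f : 'rV[R]_n -> \bar R) (x y : 'rV[R]_n) (i j : 'I_n).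

Definition chi i : 'rV[R]_n := delta_mx 0 i.

Definition dom f x : Prop := (f x < +oo)%E.

(* polyhedral convex function R^n -> R \cup {+oo}: never -oo, nonempty domain,
   and the epigraph {(x,t) | f x <= t} is a polyhedron, i.e. a finite
   intersection of closed half-spaces of R^n x R. *)
Definition polyhedral_convex f : Prop :=
  [/\ (forall x, f x != -oo%E), (exists x, dom f x) &
      exists (m : nat) (A : 'I_m -> 'rV[R]_n) (b c : 'I_m -> R),
        forall x (t : R), (f x <= t%:E)%E <->
          (forall l, \sum_(p < n) A l 0 p * x 0 p + b l * t <= c l)].

Definition M_convex f : Prop :=
  forall x y, dom f x -> dom f y -> forall i, y 0 i < x 0 i ->
    exists j, x 0 j < y 0 j /\
      exists2 eps0 : R, 0 < eps0 &
        forall eps : R, 0 <= eps <= eps0 ->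
          (f (x - eps *: (chi i - chi j))%R + f (y + eps *: (chi i - chi j))%R
             <= f x + f y)%E.

Definition dom_bounded f : Prop :=
  exists M : R, forall x, dom f x -> forall p, `|x 0 p| <= M.

Definition ddir f x i j : \bar R :=
  lim ((fun a : R => ((f (x + a *: (chi i - chi j))%R - f x) * (a^-1)%:E)%E) @ 0^'+).

Definition phi f x : \bar R :=
  \big[Order.min/+oo%E]_(i < n) \big[Order.min/+oo%E]_(j < n) ddir f x i j.

(* cbar_R(x; i, j) = max {lam >= 0 | f(x + lam(chi_i - chi_j)) - f x = lam f'_R(x;i,j)},
   rendered as the supremum (which is the maximum whenever the maximum exists). *)
Definition cbar f x i j : \bar R :=
  ereal_sup [set lam%:E | lam in [set lam : R | 0 <= lam /\
     (f (x + lam *: (chi i - chi j))%R - f x = lam%:E * ddir f x i j)%E]].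

End Defs.
Arguments chi {R n} i.

From mathcomp Require Import all_boot all_order all_algebra.
From mathcomp Require Import all_classical all_reals all_analysis.
From mathcomp Require Import ring lra.
Import Order.TTheory GRing.Theory Num.Theory.
Import numFieldNormedType.Exports.
Set Implicit Arguments. Unset Strict Implicit. Unset Printing Implicit Defensive.
Local Open Scope ring_scope.
Local Open Scope classical_set_scope.

(* Put ph := phi f y and pick theta with ph < theta <= f'(y; i, j) for every j <> i.  For
   every z in the domain,
     f z >= f y + ph * |(z - y)^+|_1 + (theta - ph) * (z_i - y_i)^+.
   Indeed, for eta > 0 the function z |-> f z - ph |(z - y)^+|_1 - (theta - ph) (z_i - y_i)^+
   + eta |z - y|_1 is continuous on the compact polyhedral domain, and an M-convex exchange
   step from any z <> y towards y strictly decreases it, so its minimum is attained at y;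
   let eta go to 0.  Since lam <= cbar(y; h, k), f grows with slope ph on the segment from
   y to y^ := y + lam (chi_h - chi_k); if f'(y^; i, j) <= ph, then for small s > 0 the point
   y^ + s (chi_i - chi_j) would violate the bound above. *)

Section Continuity.
Variables (R : realType) (n : nat).
Implicit Types z : 'rV[R]_n.

Lemma continuous_sum (I : Type) (r : seq I) (P : pred I) (u : I -> 'rV[R]_n -> R) :
  (forall i, continuous (u i)) -> continuous (fun z => \sum_(i <- r | P i) u i z).
Proof. by move=> uc; apply: continuous_big => [|i _]; [exact: add_continuous | exact: uc]. Qed.

Lemma continuous_bigmax (I : Type) (r : seq I) (P : pred I) (u0 : 'rV[R]_n -> R)
    (u : I -> 'rV[R]_n -> R) :
  continuous u0 -> (forall i, continuous (u i)) ->
  continuous (fun z => \big[Num.max/u0 z]_(i <- r | P i) u i z).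
Proof.
move=> u0c uc; elim: r => [|a r IH]; first by under eq_fun do rewrite big_nil.
under eq_fun do rewrite big_cons.
case: (P a); last exact: IH.
by move=> z; apply: continuous_max; [exact: uc | exact: IH].
Qed.

Lemma continuous_coord_shift (p : 'I_n) (r : R) : continuous (fun z => z 0 p - r).
Proof. by move=> z; apply: continuousB; [exact: coord_continuous | exact: cst_continuous]. Qed.

Lemma continuous_linear_form (w : 'I_n -> R) : continuous (fun z => \sum_(p < n) w p * z 0 p).
Proof.
apply: continuous_sum => p z.
by apply: continuousM; [exact: cst_continuous | exact: coord_continuous].
Qed.

End Continuity.

Section Deviation.
Variables (R : realType) (n : nat) (y : 'rV[R]_n).
Implicit Types (z : 'rV[R]_n) (a j p : 'I_n).

Definition pos_dev z := \sum_(p < n) Num.max (z 0 p - y 0 p) 0.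
Definition pos_dev_at i z := Num.max (z 0 i - y 0 i) 0.
Definition l1_dev z := \sum_(p < n) `|z 0 p - y 0 p|.

Lemma pos_dev_refl : pos_dev y = 0.
Proof. by rewrite /pos_dev big1 // => p _; rewrite subrr maxxx. Qed.

Lemma pos_dev_at_refl i : pos_dev_at i y = 0.
Proof. by rewrite /pos_dev_at subrr maxxx. Qed.

Lemma l1_dev_refl : l1_dev y = 0.
Proof. by rewrite /l1_dev big1 // => p _; rewrite subrr normr0. Qed.

Lemma sum_if_eq a (d : R) : \sum_(p < n) (if p == a then d else 0) = d.
Proof. by rewrite -big_mkcond /= big_pred1_eq. Qed.

Section Exchange.
Variables (z : 'rV[R]_n) (a j : 'I_n) (d : R).
Hypotheses (neq_aj : a != j) (d_ge0 : 0 <= d).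
Hypotheses (d_le_a : d <= z 0 a - y 0 a) (d_le_j : d <= y 0 j - z 0 j).

Let z' := z - d *: (chi a - chi j).

Lemma exchange_devE p :
  z' 0 p - y 0 p = z 0 p - y 0 p - (if p == a then d else 0) + (if p == j then d else 0).
Proof.
rewrite !mxE /=.
have [->|_] := eqVneq p a; first by rewrite (negbTE neq_aj) /= mulr1n mulr0n; ring.
by case: (p == j); rewrite /= ?mulr1n ?mulr0n; ring.
Qed.

Lemma pos_dev_exchange : pos_dev z' = pos_dev z - d.
Proof.
move: d_ge0 d_le_a d_le_j => d0 da dj.
rewrite /pos_dev -(sum_if_eq a d) -sumrB; apply: eq_bigr => p _; rewrite exchange_devE.
have [->|_] := eqVneq p a; first by rewrite (negbTE neq_aj) addr0 !max_l; lra.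
rewrite !subr0; have [->|_] := eqVneq p j; last by rewrite addr0.
by rewrite !max_r; lra.
Qed.

Lemma l1_dev_exchange : l1_dev z' = l1_dev z - d - d.
Proof.
move: d_ge0 d_le_a d_le_j => d0 da dj.
have -> : l1_dev z - d - d = \sum_(p < n)
    (`|z 0 p - y 0 p| - (if p == a then d else 0) - (if p == j then d else 0)).
  by rewrite !sumrB !sum_if_eq.
apply: eq_bigr => p _; rewrite exchange_devE.
have [->|_] := eqVneq p a; first by rewrite (negbTE neq_aj) addr0 subr0 !ger0_norm; lra.
rewrite !subr0; have [->|_] := eqVneq p j; last by rewrite ?addr0 ?subr0.
by rewrite !ler0_norm; lra.
Qed.

Lemma pos_dev_at_exchange i : pos_dev_at i z' = pos_dev_at i z - (if a == i then d else 0).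
Proof.
move: d_ge0 d_le_a d_le_j => d0 da dj.
rewrite /pos_dev_at exchange_devE (eq_sym a).
have [->|_] := eqVneq i a; first by rewrite (negbTE neq_aj) addr0 !max_l; lra.
rewrite !subr0; have [->|_] := eqVneq i j; last by rewrite ?addr0 ?subr0.
by rewrite !max_r; lra.
Qed.

End Exchange.

Lemma pos_dev_two_steps (al be : R) (a1 b1 c1 d1 : 'I_n) : 0 <= al -> 0 <= be ->
  pos_dev (y + al *: (chi a1 - chi b1) + be *: (chi c1 - chi d1)) <= al + be.
Proof.
move=> al0 be0.
have -> : al + be = \sum_(p < n) ((if p == a1 then al else 0) + (if p == c1 then be else 0)).
  by rewrite big_split /= !sum_if_eq.
apply: ler_sum => p _; rewrite !mxE /=.
by case: (p == a1); case: (p == b1); case: (p == c1); case: (p == d1);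
  rewrite /= ?mulr1n ?mulr0n ge_max; apply/andP; split; lra.
Qed.

Lemma two_step_dev_bound (ph th lam s : R) (h k i j : 'I_n) :
  ph <= 0 -> ph <= th -> 0 < s <= lam -> i != h -> j != i ->
  ph * lam + Num.min th 0 * s <=
    ph * pos_dev (y + lam *: (chi h - chi k) + s *: (chi i - chi j)) +
    (th - ph) * pos_dev_at i (y + lam *: (chi h - chi k) + s *: (chi i - chi j)).
Proof.
move=> ph0 phth /andP[s0 slam] ih ji.
set z := y + lam *: (chi h - chi k) + s *: (chi i - chi j).
have min_le : Num.min th 0 * s <= 0 by rewrite pmulr_lle0 // ge_min lexx orbT.
have [ik|ik] := eqVneq i k.
  have zE : z = y + (lam - s) *: (chi h - chi i) + s *: (chi h - chi j).
    by apply/rowP => p; rewrite /z ik !mxE; ring.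
  have dev_le : pos_dev z <= lam - s + s by rewrite zE; apply: pos_dev_two_steps; lra.
  have at_ge0 : 0 <= pos_dev_at i z by rewrite le_max lexx orbT.
  nra.
have dev_le : pos_dev z <= lam + s by apply: pos_dev_two_steps; lra.
have atE : pos_dev_at i z = s.
  rewrite /pos_dev_at /z !mxE /= eqxx (negbTE ih) (negbTE ik) (eq_sym i j) (negbTE ji) /=.
  by rewrite !mulr0n !mulr1n max_l; [ring | lra].
have : Num.min th 0 <= th by rewrite ge_min lexx.
rewrite atE; nra.
Qed.

Lemma continuous_pos_dev_at i : continuous (pos_dev_at i).
Proof.
move=> z; apply: (@continuous_max _ _ (fun z => z 0 i - y 0 i) (fun=> 0)).
  exact: continuous_coord_shift.
exact: cst_continuous.
Qed.

Lemma continuous_pos_dev : continuous pos_dev.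
Proof. exact: continuous_sum continuous_pos_dev_at. Qed.

Lemma continuous_l1_dev : continuous l1_dev.
Proof.
apply: continuous_sum => p z.
apply: (@continuous_comp _ _ _ (fun z => z 0 p - y 0 p) Num.norm).
  exact: continuous_coord_shift.
exact: norm_continuous.
Qed.

End Deviation.

Lemma phi_le_ddir (R : realType) n (f : 'rV[R]_n -> \bar R) x a j :
  (phi f x <= ddir f x a j)%E.
Proof. by rewrite /phi; apply: le_trans (bigmin_le _ a _) _; exact: bigmin_le. Qed.

Lemma ereal_finite_gap (R : realType) (I : finType) (P : pred I) (u : I -> \bar R) (r : R) :
  (forall x, P x -> (r%:E < u x)%E) -> exists2 t : R, r < t & forall x, P x -> (t%:E <= u x)%E.
Proof.
move=> r_lt; pose mu := \big[Order.min/+oo%E]_(x | P x) u x.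
have r_lt_mu : (r%:E < mu)%E by apply: lt_bigmin => //; rewrite ltry.
have mu_le x : P x -> (mu <= u x)%E by exact: bigmin_le_cond.
move: mu r_lt_mu mu_le => [t||] // r_lt_t mu_le.
  exists ((r + t) / 2); first by rewrite lte_fin in r_lt_t; lra.
  by move=> x Px; apply: le_trans (mu_le x Px); rewrite lee_fin; rewrite lte_fin in r_lt_t; lra.
by exists (r + 1) => [|x Px]; [lra | apply: le_trans (mu_le x Px); rewrite leey].
Qed.

Lemma fin_of_adde_le (R : realType) (u v : \bar R) (r : R) :
  u != -oo%E -> v != -oo%E -> (u + v <= r%:E)%E -> (u < +oo)%E /\ (v < +oo)%E.
Proof. by case: u => [u||]; case: v => [v||] //= _ _; rewrite ?ltry. Qed.

Section Polyhedral.
Variables (R : realType) (n : nat) (f : 'rV[R]_n -> \bar R).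
Variables (m : nat) (A : 'I_m -> 'rV[R]_n) (b c : 'I_m -> R).
Implicit Types (x z e : 'rV[R]_n) (a j : 'I_n) (l : 'I_m).

Local Notation F x := (fine (f x)).
Local Notation form l x := (\sum_(p < n) A l 0 p * x 0 p).

Hypothesis f_neqNy : forall x, f x != -oo%E.
Hypothesis epiE : forall x (t : R), (f x <= t%:E)%E <-> (forall l, form l x + b l * t <= c l).

Lemma formD l x z : form l (x + z) = form l x + form l z.
Proof. by rewrite -big_split; apply: eq_bigr => p _; rewrite !mxE mulrDr. Qed.

Lemma formZ l (s : R) x : form l (s *: x) = s * form l x.
Proof. by rewrite mulr_sumr; apply: eq_bigr => p _; rewrite !mxE mulrCA. Qed.

Lemma dom_fineK x : dom f x -> f x = (F x)%:E.
Proof. by move: (f_neqNy x); rewrite /dom; case: (f x). Qed.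

Lemma not_dom x : ~ dom f x -> f x = +oo%E.
Proof. by rewrite /dom ltey => /negP; rewrite negbK => /eqP. Qed.

Lemma dom_le_EFin x (u : R) : (f x <= u%:E)%E -> dom f x.
Proof. by move=> fx_le; rewrite /dom (le_lt_trans fx_le) ?ltry. Qed.

Lemma dom_epi x : dom f x -> forall l, form l x + b l * F x <= c l.
Proof. by move=> dx; apply/epiE; rewrite -dom_fineK. Qed.

Lemma le_convex x z (t : R) : dom f x -> dom f z -> 0 <= t <= 1 ->
  (f ((1 - t) *: x + t *: z) <= ((1 - t) * F x + t * F z)%:E)%E.
Proof.
move=> dx dz /andP[t0 t1]; apply/epiE => l.
have := dom_epi dx l; have := dom_epi dz l.
rewrite formD !formZ; nra.
Qed.

Lemma line_comb x e (s t : R) : t != 0 ->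
  (1 - s / t) *: x + s / t *: (x + t *: e) = x + s *: e.
Proof. by move=> t0; rewrite scalerDr scalerA divfK // addrA -scalerDl subrK scale1r. Qed.

Definition slope x e (s : R) := ((f (x + s *: e) - f x) * (s^-1)%:E)%E.

Lemma slope_not_dom x e (s : R) : dom f x -> ~ dom f (x + s *: e) -> 0 < s ->
  slope x e s = +oo%E.
Proof.
move=> dx nd s0; rewrite /slope (dom_fineK dx) (not_dom nd).
by rewrite /= mulyr gtr0_sg ?invr_gt0 // mul1e.
Qed.

Lemma slope_dom x e (s : R) : dom f x -> dom f (x + s *: e) ->
  slope x e s = ((F (x + s *: e) - F x) / s)%:E.
Proof. by move=> dx ds; rewrite /slope (dom_fineK dx) (dom_fineK ds). Qed.

Lemma le_slope x e (s t : R) : dom f x -> 0 < s -> s <= t -> (slope x e s <= slope x e t)%E.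
Proof.
move=> dx s0 st; have t0 : 0 < t by apply: lt_le_trans st.
have [dt|ndt] := pselect (dom f (x + t *: e)); last first.
  by rewrite (slope_not_dom dx ndt t0) leey.
have st01 : 0 <= s / t <= 1.
  by apply/andP; split; [rewrite divr_ge0 // ltW | rewrite ler_pdivrMr // mul1r].
have := le_convex dx dt st01; rewrite line_comb ?gt_eqF // => fs_le.
have ds := dom_le_EFin fs_le.
rewrite (dom_fineK ds) lee_fin in fs_le.
rewrite (slope_dom dx ds) (slope_dom dx dt) lee_fin ler_pdivrMr //.
have -> : (F (x + t *: e) - F x) / t * s = s / t * (F (x + t *: e) - F x) by ring.
lra.
Qed.

Lemma ddir_inf_slope x a j : dom f x ->
  ddir f x a j = ereal_inf (slope x (chi a - chi j) @` `]0, +oo[).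
Proof.
move=> dx; apply: cvg_lim => //; apply: nondecreasing_at_right_cvge => // s t.
by rewrite !in_itv /= !andbT => s0 _ st; exact: le_slope.
Qed.

Lemma ddir_le_slope x a j (s : R) : dom f x -> 0 < s ->
  (ddir f x a j <= slope x (chi a - chi j) s)%E.
Proof.
move=> dx s0; rewrite ddir_inf_slope //; apply: ereal_inf_lbound.
by exists s; rewrite //= in_itv /= s0.
Qed.

Lemma ddir_lt_slope x a j (u : \bar R) : dom f x -> (ddir f x a j < u)%E ->
  exists2 s0 : R, 0 < s0 & forall s, 0 < s <= s0 -> (slope x (chi a - chi j) s < u)%E.
Proof.
move=> dx; rewrite ddir_inf_slope // => /ereal_inf_lt [_ [s0 + <-]].
rewrite /= in_itv /= andbT => s00 slope_lt; exists s0 => // s /andP[s_gt0 s_le].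
exact: le_lt_trans (le_slope _ dx s_gt0 s_le) slope_lt.
Qed.

Lemma le_ddir_line x a j (v s : R) : dom f x -> (v%:E <= ddir f x a j)%E -> 0 < s ->
  dom f (x + s *: (chi a - chi j)) -> F x + s * v <= F (x + s *: (chi a - chi j)).
Proof.
move=> dx v_le s0 ds.
have := le_trans v_le (ddir_le_slope a j dx s0).
by rewrite (slope_dom dx ds) lee_fin ler_pdivlMr // => ?; lra.
Qed.

Lemma active_constraint x : dom f x -> exists2 l, b l < 0 & form l x + b l * F x = c l.
Proof.
(* Otherwise (x, F x - eps) would still satisfy every constraint. *)
move=> dx; apply: contrapT => no_active.
have slack l : b l < 0 -> form l x + b l * F x < c l.
  move=> bl; rewrite lt_neqAle dom_epi // andbT.
  by apply/eqP => E; apply: no_active; exists l.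
pose T l := (c l - form l x - b l * F x) / (- b l).
pose eps := \big[Order.min/1]_(l | b l < 0) T l.
have eps0 : 0 < eps.
  apply: lt_bigmin => // l bl; apply: divr_gt0; last by rewrite oppr_gt0.
  by have := slack l bl; lra.
have : (f x <= (F x - eps)%:E)%E.
  apply/epiE => l; have := dom_epi dx l.
  have [bl|bl] := ltP (b l) 0; last by nra.
  have : eps <= T l by rewrite /eps (bigD1 l) //= ge_min lexx.
  rewrite /T ler_pdivlMr ?oppr_gt0 //; nra.
by rewrite (dom_fineK dx) lee_fin; lra.
Qed.

Lemma ddir_gtNy x a j : dom f x -> (-oo < ddir f x a j)%E.
Proof.
(* The active constraint bounds every difference quotient from below by [- S / b l]. *)
move=> dx; have [l bl act] := active_constraint dx.
pose S := form l (chi a - chi j).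
apply: (@lt_le_trans _ _ (- S / b l)%:E); first by rewrite ltNyr.
rewrite ddir_inf_slope //; apply: le_ereal_inf_tmp => _ [s + <-].
rewrite /= in_itv /= andbT => s0.
have [ds|nds] := pselect (dom f (x + s *: (chi a - chi j))); last first.
  by rewrite (slope_not_dom dx nds s0) leey.
rewrite (slope_dom dx ds) lee_fin ler_pdivlMr //.
have := dom_epi ds l; rewrite formD formZ -/S.
have : - S / b l * b l = - S by rewrite divfK ?lt_eqF.
nra.
Qed.

Lemma line_le_between x e (ph mu nu : R) : dom f x ->
  f (x + mu *: e) = (F x + mu * ph)%:E -> 0 <= nu <= mu ->
  (f (x + nu *: e) <= (F x + nu * ph)%:E)%E.
Proof.
move=> dx fmu /andP[nu0 numu].
have [->|nu_neq0] := eqVneq nu 0; first by rewrite scale0r addr0 mul0r addr0 dom_fineK.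
have mu0 : 0 < mu by rewrite (lt_le_trans _ numu) // lt0r nu_neq0.
have dmu : dom f (x + mu *: e) by rewrite /dom fmu ltry.
have nu01 : 0 <= nu / mu <= 1.
  by apply/andP; split; [rewrite divr_ge0 // ltW | rewrite ler_pdivrMr // mul1r].
have := le_convex dx dmu nu01; rewrite line_comb ?gt_eqF // fmu /=.
suff -> : (1 - nu / mu) * F x + nu / mu * (F x + mu * ph) = F x + nu * ph by [].
by field; rewrite gt_eqF.
Qed.

Lemma line_le_closed x e (ph lam : R) : dom f x ->
  (forall eps, 0 < eps -> exists2 nu, lam - eps < nu <= lam &
     (f (x + nu *: e) <= (F x + nu * ph)%:E)%E) ->
  (f (x + lam *: e) <= (F x + lam * ph)%:E)%E.
Proof.
move=> dx near_lam; apply/epiE => l; rewrite formD formZ leNgt; apply/negP => gt_c.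
pose kappa := form l e + b l * ph.
have K_gt0 : 0 < `|kappa| + 1 by apply: ltr_wpDl.
pose gap := form l x + lam * form l e + b l * (F x + lam * ph) - c l.
have gap_gt0 : 0 < gap by rewrite /gap; lra.
pose eps := gap / (`|kappa| + 1).
have [nu /andP[nu_gt nu_le]] := near_lam eps (divr_gt0 gap_gt0 K_gt0).
move=> /epiE/(_ l); rewrite formD formZ.
have : eps * (`|kappa| + 1) = gap by rewrite divfK ?gt_eqF.
have := ler_norm kappa; have := normr_ge0 kappa.
clearbody eps; rewrite /gap /kappa in gap_gt0 *; nra.
Qed.

Lemma le_cbar_line x a j (ph lam : R) : dom f x -> ddir f x a j = ph%:E ->
  0 <= lam -> (lam%:E <= cbar f x a j)%E ->
  (f (x + lam *: (chi a - chi j)) <= (F x + lam * ph)%:E)%E.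
Proof.
move=> dx ddirE lam0 lam_le; apply: line_le_closed => // eps eps0.
have /ereal_sup_gt [_ [mu [mu0 fmu] <-]] : ((lam - eps)%:E < cbar f x a j)%E.
  by apply: lt_le_trans lam_le; rewrite lte_fin; lra.
rewrite lte_fin => mu_gt.
have fmuE : f (x + mu *: (chi a - chi j)) = (F x + mu * ph)%:E.
  move: fmu (f_neqNy (x + mu *: (chi a - chi j))); rewrite ddirE (dom_fineK dx).
  by case: (f _) => [r||] //= [rE] _; congr EFin; lra.
exists (Num.min mu lam); first by rewrite lt_min mu_gt ge_min lexx orbT; lra.
by apply: (line_le_between dx fmuE); rewrite le_min mu0 lam0 ge_min lexx.
Qed.

(* On its domain f is the maximum of the affine functions [facet l] with [b l < 0]: this is
   what makes f continuous there. *)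
Definition facet l x := (c l - form l x) / b l.

Definition facet_max l0 x := \big[Num.max/facet l0 x]_(l | b l < 0) facet l x.

Lemma facet_le_fine l x : dom f x -> b l < 0 -> facet l x <= F x.
Proof. by move=> dx bl; have := dom_epi dx l; rewrite /facet ler_ndivrMr //; lra. Qed.

Lemma facet_maxE l0 x : b l0 < 0 -> dom f x -> facet_max l0 x = F x.
Proof.
move=> bl0 dx; apply/eqP; rewrite eq_le; apply/andP; split.
  by apply: bigmax_le => [|l bl]; exact: facet_le_fine.
have [l bl act] := active_constraint dx.
have -> : F x = facet l x by rewrite /facet -act; field; rewrite lt_eqF.
exact: le_bigmax_cond.
Qed.

Lemma continuous_facet_max l0 : continuous (facet_max l0).
Proof.
have facet_cont l : continuous (facet l).
  move=> x; apply: (@continuousM _ _ (fun x => c l - form l x) (fun=> (b l)^-1)).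
    by apply: continuousB; [exact: cst_continuous | exact: continuous_linear_form].
  exact: cst_continuous.
exact: continuous_bigmax.
Qed.

Section NonemptyDomain.
Variable x0 : 'rV[R]_n.
Hypothesis dom_x0 : dom f x0.

Lemma epi_coef_le0 l : b l <= 0.
Proof.
rewrite leNgt; apply/negP => bl.
pose t := Num.max (F x0) (facet l x0 + 1).
have : (f x0 <= t%:E)%E by rewrite (dom_fineK dom_x0) lee_fin le_max lexx.
move=> /epiE/(_ l); have : facet l x0 * b l = c l - form l x0 by rewrite divfK ?gt_eqF.
have : facet l x0 + 1 <= t by rewrite le_max lexx orbT.
nra.
Qed.

Lemma domE x : dom f x <-> forall l, b l = 0 -> form l x <= c l.
Proof.
split=> [dx l bl|flat]; first by have := dom_epi dx l; rewrite bl mul0r addr0.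
have [l0 bl0 _] := active_constraint dom_x0.
apply: (@dom_le_EFin _ (facet_max l0 x)); apply/epiE => l.
case: (ltgtP (b l) 0) => bl; last by rewrite bl mul0r addr0; exact: flat.
- have : facet l x <= facet_max l0 x by exact: le_bigmax_cond.
  have : facet l x * b l = c l - form l x by rewrite divfK ?lt_eqF.
  nra.
- by have := epi_coef_le0 l; rewrite leNgt bl.
Qed.

Lemma closed_dom : closed (dom f).
Proof.
have -> : dom f = \bigcap_(l in [set l | b l = 0]) [set x | form l x <= c l].
  by apply/seteqP; split => x /domE.
apply: closed_bigI => l _.
apply: (@preimage_closed _ _ (fun x => form l x) [set r | r <= c l]); last exact: closed_le.
by move=> x _; exact: continuous_linear_form.
Qed.

Lemma compact_dom : dom_bounded f -> compact (dom f).
Proof.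
move=> [M bndM]; apply: bounded_closed_compact closed_dom.
exists (Num.max M 0); split; first exact: num_real.
move=> N N_gt x dx /=; rewrite -[X in X <= _]/(mx_norm x) mx_normrE.
have MN : M <= N by apply: le_trans (ltW N_gt); rewrite le_max lexx.
apply: bigmax_le => [|[p q] _]; first by apply: le_trans (ltW N_gt); rewrite le_max lexx orbT.
by rewrite (ord1 p); exact: le_trans (bndM x dx q) MN.
Qed.

End NonemptyDomain.

Section LowerBound.
Hypothesis f_M_convex : M_convex f.
Hypothesis f_dom_bounded : dom_bounded f.
Variables (y : 'rV[R]_n) (i : 'I_n) (ph theta : R).
Hypothesis dom_y : dom f y.
Hypothesis ph_le_ddir : forall a j, (ph%:E <= ddir f y a j)%E.
Hypothesis theta_le_ddir : forall j, j != i -> (theta%:E <= ddir f y i j)%E.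

Lemma exists_coord_gt z : dom f z -> z != y -> exists a, y 0 a < z 0 a.
Proof.
move=> dz zy; apply: contrapT => no_gt.
have z_le a : z 0 a <= y 0 a by rewrite leNgt; apply/negP => ?; apply: no_gt; exists a.
have [a za_neq] : exists a, z 0 a != y 0 a.
  apply: contrapT => all_eq; move/eqP: zy; apply; apply/rowP => a.
  by apply/eqP; apply: contrapT => ?; apply: all_eq; exists a; apply/negP.
have za_lt : z 0 a < y 0 a by rewrite lt_neqAle za_neq z_le.
have [j [yj_lt _]] := f_M_convex dom_y dz za_lt.
by have := z_le j; rewrite leNgt yj_lt.
Qed.

Definition penalized (eta : R) z :=
  F z - ph * pos_dev y z - (theta - ph) * pos_dev_at y i z + eta * l1_dev y z.

Lemma penalized_exchange_lt eta z : 0 < eta -> dom f z -> z != y ->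
  exists2 z', dom f z' & penalized eta z' < penalized eta z.
Proof.
move=> eta0 dz zy; have [a ya_lt] := exists_coord_gt dz zy.
have [j [zj_lt [eps0 eps0_gt exch]]] := f_M_convex dz dom_y ya_lt.
pose d := Num.min eps0 (Num.min (z 0 a - y 0 a) (y 0 j - z 0 j)).
have d0 : 0 < d by rewrite !lt_min eps0_gt !subr_gt0 ya_lt zj_lt.
have d_le : d <= eps0 by rewrite ge_min lexx.
have da : d <= z 0 a - y 0 a by rewrite !ge_min lexx orbT.
have dj : d <= y 0 j - z 0 j by rewrite !ge_min lexx !orbT.
have aj : a != j by apply/eqP => aj; move: ya_lt zj_lt; rewrite aj; lra.
have := exch d; rewrite ltW //= d_le => /(_ isT).
rewrite (dom_fineK dz) (dom_fineK dom_y) -EFinD => exch_le.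
have [dz' dy'] := fin_of_adde_le (f_neqNy _) (f_neqNy _) exch_le.
move: exch_le; rewrite (dom_fineK dz') (dom_fineK dy') -EFinD lee_fin => exch_le.
exists (z - d *: (chi a - chi j)) => //.
rewrite /penalized (pos_dev_exchange aj (ltW d0) da dj) (l1_dev_exchange aj (ltW d0) da dj).
rewrite (pos_dev_at_exchange aj (ltW d0) da dj i).
have [ai|ai] := eqVneq a i.
  subst a; rewrite eq_sym in aj.
  have := le_ddir_line dom_y (theta_le_ddir aj) d0 dy'; nra.
have := le_ddir_line dom_y (ph_le_ddir a j) d0 dy'.
nra.
Qed.

Lemma continuous_penalized eta : {within dom f, continuous (penalized eta)}.
Proof.
have [l0 bl0 _] := active_constraint dom_y.
pose g z := facet_max l0 z - ph * pos_dev y z - (theta - ph) * pos_dev_at y i z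
  + eta * l1_dev y z.
have gE : {in (dom f : set _), g =1 penalized eta}.
  by move=> z; rewrite inE => dz; rewrite /g /penalized facet_maxE.
have g_cont : continuous g.
  move=> z; apply: (continuousD (f := fun z => facet_max l0 z - ph * pos_dev y z
      - (theta - ph) * pos_dev_at y i z)).
    apply: (continuousB (f := fun z => facet_max l0 z - ph * pos_dev y z)).
      apply: continuousB; first exact: continuous_facet_max.
      by apply: (@continuousM _ _ (fun=> ph)); [exact: cst_continuous | exact: continuous_pos_dev].
    apply: (@continuousM _ _ (fun=> theta - ph));
      [exact: cst_continuous | exact: continuous_pos_dev_at].
  by apply: (@continuousM _ _ (fun=> eta)); [exact: cst_continuous | exact: continuous_l1_dev].
exact: subspace_eq_continuous gE (continuous_subspaceT g_cont).
Qed.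

Lemma penalized_ge eta z : 0 < eta -> dom f z -> F y <= penalized eta z.
Proof.
move=> eta0 dz.
have [z0 + z0_min] := EVT_min_rV (ex_intro _ y dom_y) (compact_dom dom_y f_dom_bounded)
  (@continuous_penalized eta).
rewrite inE => dz0.
have [z0y|z0y] := eqVneq z0 y.
  have := z0_min z; rewrite inE z0y => /(_ dz).
  by rewrite /penalized pos_dev_refl pos_dev_at_refl l1_dev_refl !mulr0 !subr0 addr0.
have [z' dz' lt] := penalized_exchange_lt eta0 dz0 z0y.
by have := z0_min z'; rewrite inE => /(_ dz'); rewrite leNgt lt.
Qed.

Lemma M_convex_lower_bound z : dom f z ->
  F y + ph * pos_dev y z + (theta - ph) * pos_dev_at y i z <= F z.
Proof.
move=> dz; rewrite -subr_ge0 leNgt; apply/negP; set X := _ - _ => X_lt0.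
have l1_ge0 : 0 <= l1_dev y z by apply: sumr_ge0 => p _; exact: normr_ge0.
pose eta := - X / (l1_dev y z + 1).
have eta0 : 0 < eta by apply: divr_gt0; lra.
have : eta * (l1_dev y z + 1) = - X by rewrite divfK // gt_eqF //; lra.
have := penalized_ge eta0 dz; rewrite /penalized /X in X_lt0 *.
clearbody eta; nra.
Qed.

Lemma ddir_exchange_gt h k j lam : i != h -> j != i -> ph < 0 -> ph < theta -> 0 < lam ->
  (f (y + lam *: (chi h - chi k)) <= (F y + lam * ph)%:E)%E ->
  (ph%:E < ddir f (y + lam *: (chi h - chi k)) i j)%E.
Proof.
move=> ih ji ph_lt0 ph_lt lam0 f_step.
set y' := y + lam *: (chi h - chi k).
have dy' := dom_le_EFin f_step.
rewrite ltNge; apply/negP => ddir_le.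
have /(ddir_lt_slope dy') [s0 s0_gt slope_lt] : (ddir f y' i j < (Num.min theta 0)%:E)%E.
  by apply: le_lt_trans ddir_le _; rewrite lte_fin lt_min ph_lt ph_lt0.
pose s := Num.min s0 lam.
have s_gt0 : 0 < s by rewrite lt_min s0_gt lam0.
have s_le : s <= lam by rewrite ge_min lexx orbT.
have := slope_lt s; rewrite s_gt0 ge_min lexx => /(_ isT) slope_s.
have dz : dom f (y' + s *: (chi i - chi j)).
  apply: contrapT => nd; move: slope_s.
  by rewrite (slope_not_dom dy' nd s_gt0) ltNge leey.
move: slope_s; rewrite (slope_dom dy' dz) lte_fin ltr_pdivrMr // => slope_s.
rewrite (dom_fineK dy') lee_fin in f_step.
have := M_convex_lower_bound dz.
have := @two_step_dev_bound _ _ y ph theta lam s h k i j (ltW ph_lt0) (ltW ph_lt).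
rewrite s_gt0 s_le => /(_ isT ih ji).
nra.
Qed.

End LowerBound.

End Polyhedral.

Theorem mainTheorem16 (R : realType) (n : nat) (f : 'rV[R]_n -> \bar R)
  (y : 'rV[R]_n) (i h k : 'I_n) (lam : R) :
  polyhedral_convex f -> M_convex f -> dom_bounded f ->
  dom f y -> (phi f y < 0)%E ->
  (forall j, j != i -> (phi f y < ddir f y i j)%E) ->
  h != k -> ddir f y h k = phi f y ->
  0 < lam -> (lam%:E <= cbar f y h k)%E ->
  forall j, j != i ->
    (phi f y < ddir f (y + lam *: (chi h - chi k)) i j)%E.
Proof.
move=> [f_neqNy _ [m [A [b [c epiE]]]]] f_M_convex f_bounded dom_y phi_lt0 i_gt hk hk_min.
move=> lam0 lam_le j ji.
have [ph phiE] : exists ph : R, phi f y = ph%:E.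
  have := ddir_gtNy f_neqNy epiE h k dom_y; rewrite hk_min.
  by move: phi_lt0; case: (phi f y) => [r||] // _ _; exists r.
rewrite phiE lte_fin in phi_lt0; rewrite phiE in i_gt hk_min *.
have [theta ph_lt theta_le] := ereal_finite_gap i_gt.
have ih : i != h.
  apply/eqP => ih; subst h; have := i_gt k; rewrite eq_sym hk hk_min ltxx.
  by move/(_ isT).
apply: (ddir_exchange_gt f_neqNy epiE f_M_convex f_bounded dom_y _ theta_le) => //.
  by move=> a b'; rewrite -phiE; exact: phi_le_ddir.
exact: (le_cbar_line f_neqNy epiE dom_y hk_min (ltW lam0) lam_le).
Qed.
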